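(* Let $V$ be a preference profile over a finite candidate set $C$ with a fixed tie-breaking order, and let $w$ be the 2-Approval winner at $V$. Then all Type 2 manipulators at $V$ (GS-manipulators $i$ with $w\in\mathrm{top}_2(v_i)$) have the same two top-ranked candidates in the same order; in particular they all manipulate in favour of the same candidate.
   Context: Each voter $i$ has a strict linear order $v_i$ over $C$; $\mathrm{top}_2(v)$ is the set of the two highest-ranked candidates of $v$. 2-Approval: each candidate gets one point from each voter ranking her among his top two; the highest score wins, ties broken in favour of the candidate highest in the fixed strict linear order on $C$. Write $\mathcal{R}$ for this rule and $(V_{-i},v_i')$ for $V$ with $v_i$ replaced by $v_i'$. A GS-manipulation of voter $i$ at $V$ is a vote $v_i'$ such that $i$ strictly prefers $\mathcal{R}(V_{-i},v_i')$ to $\mathcal{R}(V)$ and for every vote $v_i''$ either $\mathcal{R}(V_{-i},v_i'')=\mathcal{R}(V_{-i},v_i')$ or $i$ strictly prefers $\mathcal{R}(V_{-i},v_i')$ to $\mathcal{R}(V_{-i},v_i'')$; it is in favour of $\mathcal{R}(V_{-i},v_i')$; $i$ is a GS-manipulator if he has one. *)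

From mathcomp Require Import all_boot.
Set Implicit Arguments. Unset Strict Implicit. Unset Printing Implicit Defensive.

Section Voting.
Variable C : finType.

(* A strict linear order on C: [v a b] means "a is ranked above b". *)
Definition strict_linear (v : rel C) : Prop :=
  [/\ forall a, ~~ v a a,
      forall a b c, v a b -> v b c -> v a c &
      forall a b, a != b -> v a b || v b a].

(* position of c in v (0 = top) *)
Definition rank (v : rel C) (c : C) : nat := #|[set d | v d c]|.

Definition top2 (v : rel C) : {set C} := [set c | rank v c < 2].

Variable n : nat.
Definition profile := 'I_n -> rel C.

Definition upd (V : profile) (i : 'I_n) (v : rel C) : profile :=
  fun j => if j == i then v else V j.

Definition score (V : profile) (c : C) : nat := #|[set j : 'I_n | c \in top2 (V j)]|.

Definition beats (t : rel C) (V : profile) (w c : C) : bool :=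
  (score V c < score V w) || ((score V c == score V w) && t w c).

(* The 2-Approval winner (always [Some _] when C is nonempty and t is a strict
   linear order; [None] only when C is empty). *)
Definition R2 (t : rel C) (V : profile) : option C :=
  [pick w | [forall c, (c != w) ==> beats t V w c]].

Definition prefers (v : rel C) (a b : option C) : bool :=
  match a, b with Some x, Some y => v x y | _, _ => false end.

Definition GS_manipulation (t : rel C) (V : profile) (i : 'I_n) (v' : rel C) : Prop :=
  [/\ strict_linear v',
      prefers (V i) (R2 t (upd V i v')) (R2 t V) &
      forall v'', strict_linear v'' ->
        R2 t (upd V i v'') = R2 t (upd V i v') \/
        prefers (V i) (R2 t (upd V i v')) (R2 t (upd V i v''))].

Definition GS_manipulator (t : rel C) (V : profile) (i : 'I_n) : Prop :=
  exists v', GS_manipulation t V i v'.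

Definition type2_manipulator (t : rel C) (V : profile) (i : 'I_n) : Prop :=
  GS_manipulator t V i /\ exists w, R2 t V = Some w /\ w \in top2 (V i).

End Voting.

(* A type 2 manipulator i has the winner w in its top two, and a successful manipulation must elect
   someone i ranks above w; so w is second in v_i and the new winner is the top candidate a_i of v_i.
   Changing v_i can only lower the scores of the members of top_2(v_i) = {a_i, w} and only raise the
   others.  Hence if two type 2 manipulators had tops a_i <> a_j, the winner a_i after i's
   manipulation would already beat a_j at V, and symmetrically a_j would beat a_i at V, which is
   impossible since "beats" is asymmetric for a strict tie-breaking order. *)
From mathcomp Require Import all_boot zify.
Set Implicit Arguments. Unset Strict Implicit. Unset Printing Implicit Defensive.

Section Ranks.
Variable C : finType.

Lemma strict_linear_asym (v : rel C) a b : strict_linear v -> v a b -> ~~ v b a.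
Proof.
by case=> irr tr _ vab; apply/negP => /(tr _ _ _ vab); rewrite (negbTE (irr a)).
Qed.

Lemma rank_lt (v : rel C) a b : strict_linear v -> v a b -> rank v a < rank v b.
Proof.
case=> irr tr _ vab; apply: proper_card; apply/properP; split.
  by apply/subsetP => d; rewrite !inE => /tr; apply.
by exists a; rewrite !inE ?vab ?(negbTE (irr a)).
Qed.

Lemma rank_inj (v : rel C) : strict_linear v -> injective (rank v).
Proof.
move=> sl a b eq_ab; apply/eqP/negPn/negP; case: (sl) => _ _ tot /tot.
by case/orP=> /(rank_lt sl); rewrite eq_ab ltnn.
Qed.

Lemma rank_eq_at (v : rel C) a c k : strict_linear v -> rank v a = k -> rank v c = k <-> c = a.
Proof. by move=> sl <-; split=> [/(rank_inj sl) | ->]. Qed.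

Lemma top2_rank01 (v : rel C) a b :
  strict_linear v -> rank v a = 0 -> rank v b = 1 -> top2 v = [set a; b].
Proof.
move=> sl ra rb; apply/setP => c; rewrite !inE.
apply/idP/orP => [lt2 | [] /eqP ->]; [| by rewrite ra | by rewrite rb].
have [rc | rc] : rank v c = 0 \/ rank v c = 1 by lia.
  by left; apply/eqP; apply/(rank_eq_at _ sl ra).
by right; apply/eqP; apply/(rank_eq_at _ sl rb).
Qed.

End Ranks.

Section TwoApproval.
Variables (C : finType) (n : nat) (t : rel C).
Hypothesis t_strict : strict_linear t.

Lemma R2_beats (V : profile C n) w c : R2 t V = Some w -> c != w -> beats t V w c.
Proof.
by rewrite /R2; case: pickP => // x /forallP x_wins [<-] cx; apply: (implyP (x_wins c)).
Qed.

Lemma beats_asym (V : profile C n) a b : beats t V a b -> ~~ beats t V b a.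
Proof.
rewrite /beats => /orP[lt | /andP[/eqP eq tab]]; apply/negP;
  case/orP=> [lt' | /andP[/eqP eq' tba]]; try lia.
by move: tba; rewrite (negbTE (strict_linear_asym t_strict tab)).
Qed.

Lemma score_upd_top2 (V : profile C n) i v c :
  c \in top2 (V i) -> score (upd V i v) c <= score V c.
Proof.
move=> ci; apply: subset_leq_card; apply/subsetP => j; rewrite !inE /upd.
by case: eqP => [-> _ | //]; rewrite inE in ci.
Qed.

Lemma score_upd_not_top2 (V : profile C n) i v c :
  c \notin top2 (V i) -> score V c <= score (upd V i v) c.
Proof.
move=> ci; apply: subset_leq_card; apply/subsetP => j; rewrite !inE /upd.
by case: eqP => // -> cVi; rewrite inE cVi in ci.
Qed.

Lemma beats_upd (V : profile C n) i v a b :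
  a \in top2 (V i) -> b \notin top2 (V i) -> beats t (upd V i v) a b -> beats t V a b.
Proof.
move=> /(score_upd_top2 v) sa /(score_upd_not_top2 v) sb.
rewrite /beats => /orP[lt | /andP[/eqP eq tab]]; apply/orP; first by left; lia.
have [lt | ge] := ltnP (score V b) (score V a); first by left.
by right; rewrite tab andbT; apply/eqP; lia.
Qed.

Variable V : profile C n.
Hypothesis V_strict : forall k, strict_linear (V k).

Lemma type2_manipulation_outcome i v w :
  R2 t V = Some w -> w \in top2 (V i) -> GS_manipulation t V i v ->
  exists2 a, R2 t (upd V i v) = Some a & rank (V i) a = 0 /\ rank (V i) w = 1.
Proof.
move=> Vw wi [_ better _]; move: better; rewrite Vw.
case: (R2 t (upd V i v)) => [a|] //= aw; exists a => //.
by have := rank_lt (V_strict i) aw; rewrite inE in wi; lia.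
Qed.

Lemma type2_manipulations_same_top i j vi vj w a b :
  R2 t V = Some w ->
  rank (V i) a = 0 -> rank (V i) w = 1 -> R2 t (upd V i vi) = Some a ->
  rank (V j) b = 0 -> rank (V j) w = 1 -> R2 t (upd V j vj) = Some b ->
  a = b.
Proof.
move=> Vw ra rwi Via rb rwj Vjb; apply/eqP/negPn/negP => ab.
have a_ne_w : a != w by apply: contra_eq_neq ra => ->; rewrite rwi.
have b_ne_w : b != w by apply: contra_eq_neq rb => ->; rewrite rwj.
have topi := top2_rank01 (V_strict i) ra rwi.
have topj := top2_rank01 (V_strict j) rb rwj.
have beats_ab : beats t V a b.
  apply: (beats_upd (i := i) (v := vi)); last by apply: R2_beats Via _; rewrite eq_sym.
    by rewrite topi !inE eqxx.
  by rewrite topi !inE negb_or eq_sym ab.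
have beats_ba : beats t V b a.
  apply: (beats_upd (i := j) (v := vj)); last exact: R2_beats Vjb ab.
    by rewrite topj !inE eqxx.
  by rewrite topj !inE negb_or ab.
by move: beats_ba; rewrite (negbTE (beats_asym beats_ab)).
Qed.

End TwoApproval.

Theorem mainTheorem10 (C : finType) (n : nat) (t : rel C) (V : profile C n) :
  strict_linear t ->
  (forall k, strict_linear (V k)) ->
  forall i j : 'I_n,
    type2_manipulator t V i -> type2_manipulator t V j ->
    (forall c : C, rank (V i) c = 0 <-> rank (V j) c = 0) /\
    (forall c : C, rank (V i) c = 1 <-> rank (V j) c = 1) /\
    (forall vi vj, GS_manipulation t V i vi -> GS_manipulation t V j vj ->
       R2 t (upd V i vi) = R2 t (upd V j vj)).
Proof.
move=> t_strict V_strict i j [[vi0 mi0] [w [Vw wi]]] [[vj0 mj0] [w' [Vw' wj]]].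
move: Vw'; rewrite Vw => -[ww']; subst w'.
have [a Via [ra rwi]] := type2_manipulation_outcome V_strict Vw wi mi0.
have [b Vjb [rb rwj]] := type2_manipulation_outcome V_strict Vw wj mj0.
have ab := type2_manipulations_same_top t_strict V_strict Vw ra rwi Via rb rwj Vjb.
subst b; split; [|split] => [c | c | vi vj mi mj].
- by rewrite (rank_eq_at _ (V_strict i) ra) (rank_eq_at _ (V_strict j) rb).
- by rewrite (rank_eq_at _ (V_strict i) rwi) (rank_eq_at _ (V_strict j) rwj).
have [x -> [/(rank_eq_at _ (V_strict i) ra) -> _]] :=
  type2_manipulation_outcome V_strict Vw wi mi.
by have [y -> [/(rank_eq_at _ (V_strict j) rb) -> _]] :=
  type2_manipulation_outcome V_strict Vw wj mj.
Qed.
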